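(* Every top-choice social choice function is pseudomonotone, and hence for every $\varepsilon>0$ there is a lex-truthful randomized mechanism that $\varepsilon$-implements it.
   Context: Setting: agents $N=\{1,\dots,n\}$, finite outcome set $O$, each agent $j$ has a set $\Sigma_j$ of allowed strict total orders on $O$, $\Sigma=\prod_j\Sigma_j$; $\succ(1)$ denotes the top outcome of $\succ$ and $\mathrm{pos}_\succ(o)$ the position of $o$. A social choice function $f:\Sigma\to O$ is top-choice if $f(\succ)=g(\succ_1(1),\dots,\succ_n(1))$ for some $g:O^n\to O$ such that for all $j$, all $o_{-j}\in O^{n-1}$ and all $o\in O$: if $g(o,o_{-j})=o'$ then $g(o',o_{-j})=o'$ (here $o$ is in coordinate $j$). $f$ is pseudomonotone if for every $j$, $\succ_{-j}$, $\succ_j,\succ'_j\in\Sigma_j$, with $o=f(\succ_j,\succ_{-j})$, $o'=f(\succ'_j,\succ_{-j})$: either $o=o'$ or $o\succ_j o'$, or there is $o''$ with $o''\succ_j o'$ and $\mathrm{pos}_{\succ_j}(o'')<\mathrm{pos}_{\succ'_j}(o'')$. A randomized mechanism $\varepsilon$-implements $f$ if $\Pr[\mathcal{M}(\succ)=f(\succ)]\ge1-\varepsilon$ for all $\succ$. For lotteries $p\ne q$, $p$ lex-dominates $q$ w.r.t. $\succ$ if at the first position $i$ (in the order $\succ$) where $p(\succ(i))\ne q(\succ(i))$ we have $p(\succ(i))>q(\succ(i))$. $\mathcal{M}$ is lex-truthful if for all $j,\succ_j,\succ'_j,\succ_{-j}$, either $\mathcal{M}(\succ_j,\succ_{-j})=\mathcal{M}(\succ'_j,\succ_{-j})$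 or the former lex-dominates the latter w.r.t. $\succ_j$. *)

From HB Require Import structures.
From mathcomp Require Import all_boot all_order all_algebra.
From mathcomp Require Import reals.
Set Implicit Arguments. Unset Strict Implicit. Unset Printing Implicit Defensive.
Import Order.TTheory GRing.Theory Num.Theory.

(* A strict total order on the finite outcome set O is encoded as a ranking:
   a duplicate-free list [s] enumerating all outcomes, best first.
   o >_s o'  iff  index o s < index o' s ;  pos_s(o) = index o s (0-based). *)
Definition is_order (O : finType) (s : seq O) : Prop := perm_eq s (enum O).
Definition prefers (O : finType) (s : seq O) (o o' : O) : bool :=
  index o s < index o' s.
Definition pos (O : finType) (s : seq O) (o : O) : nat := index o s.
(* top outcome; the default [o0] is irrelevant for nonempty orders *)
Definition top (O : finType) (o0 : O) (s : seq O) : O := head o0 s.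

Definition profile (n : nat) (O : finType) := 'I_n -> seq O.
Definition upd (n : nat) (A : Type) (P : 'I_n -> A) (j : 'I_n) (x : A) : 'I_n -> A :=
  fun k => if k == j then x else P k.
Definition updf (n : nat) (O : finType) (t : {ffun 'I_n -> O}) (j : 'I_n) (o : O)
  : {ffun 'I_n -> O} := [ffun k => if k == j then o else t k].

Definition in_Sigma n (O : finType) (Sig : 'I_n -> pred (seq O)) (P : profile n O) :=
  forall j, Sig j (P j).

Definition top_choice n (O : finType) (o0 : O) (Sig : 'I_n -> pred (seq O))
  (f : profile n O -> O) : Prop :=
  exists g : {ffun 'I_n -> O} -> O,
    (forall P, in_Sigma Sig P -> f P = g [ffun j => top o0 (P j)]) /\
    (forall (j : 'I_n) (t : {ffun 'I_n -> O}) (o o' : O),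
        g (updf t j o) = o' -> g (updf t j o') = o').

Definition pseudomonotone n (O : finType) (Sig : 'I_n -> pred (seq O))
  (f : profile n O -> O) : Prop :=
  forall (j : 'I_n) (P : profile n O) (s' : seq O),
    in_Sigma Sig P -> Sig j s' ->
    let o := f P in let o' := f (upd P j s') in
    o = o' \/ prefers (P j) o o' \/
    exists o'' : O, prefers (P j) o'' o' /\ pos (P j) o'' < pos s' o''.

Definition is_lottery (R : realType) (O : finType) (p : {ffun O -> R}) : Prop :=
  (forall o, 0 <= p o)%R /\ (\sum_(o : O) p o = 1)%R.

Definition mechanism n (R : realType) (O : finType) := profile n O -> {ffun O -> R}.

Definition is_mechanism n (R : realType) (O : finType) (Sig : 'I_n -> pred (seq O))
  (M : mechanism n R O) : Prop :=
  forall P, in_Sigma Sig P -> is_lottery (M P).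

Definition eps_implements n (R : realType) (O : finType) (Sig : 'I_n -> pred (seq O))
  (M : mechanism n R O) (f : profile n O -> O) (eps : R) : Prop :=
  forall P, in_Sigma Sig P -> (1 - eps <= M P (f P))%R.

Definition lex_dominates (R : realType) (O : finType) (o0 : O) (s : seq O)
  (p q : {ffun O -> R}) : Prop :=
  exists i : nat, i < size s /\
    (forall k, k < i -> p (nth o0 s k) = q (nth o0 s k)) /\
    (q (nth o0 s i) < p (nth o0 s i))%R.

Definition lex_truthful n (R : realType) (O : finType) (o0 : O)
  (Sig : 'I_n -> pred (seq O)) (M : mechanism n R O) : Prop :=
  forall (j : 'I_n) (P : profile n O) (s' : seq O),
    in_Sigma Sig P -> Sig j s' ->
    M P = M (upd P j s') \/ lex_dominates o0 (P j) (M P) (M (upd P j s')).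

(* A top-choice rule only sees the agents' tops, and by its defining
   property, if reporting some top o' yields o' itself, then reporting the
   true top a yields a as well.  Hence a misreport either leaves the outcome
   unchanged or moves the top away from a; in the latter case a itself is the
   witness o'' of pseudomonotonicity.  For the mechanism, run f with
   probability 1 - w and a uniformly random dictator with probability w.  A
   misreport that keeps the top changes nothing; one that changes the top
   strictly lowers the probability of the true top a in the dictator part and
   cannot raise it in the f part, so the true report wins lexicographically
   already at a. *)

From HB Require Import structures.
From mathcomp Require Import all_boot all_order all_algebra.
From mathcomp Require Import reals.
From mathcomp Require Import lra.
Import Order.TTheory GRing.Theory Num.Theory.

Set Implicit Arguments.
Unset Strict Implicit.
Unset Printing Implicit Defensive.

Section Orders.
Variables (O : finType) (o0 : O).

Lemma size_order_gt0 (s : seq O) : is_order s -> 0 < size s.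
Proof. by move=> /perm_size ->; rewrite -cardE; apply/card_gt0P; exists o0. Qed.

Lemma pos_top (s : seq O) : pos s (top o0 s) = 0.
Proof. by case: s => //= x s; rewrite /pos /= eqxx. Qed.

Lemma pos_gt0 (s : seq O) (o : O) :
  0 < size s -> (0 < pos s o) = (o != top o0 s).
Proof. by case: s => //= x s _; rewrite eq_sym; case: eqP. Qed.

Lemma prefers_topl (s : seq O) (o : O) :
  prefers s (top o0 s) o = (0 < pos s o).
Proof. by case: s => //= x s; rewrite /prefers /= eqxx. Qed.

End Orders.

Section Profiles.
Variables (n : nat) (O : finType) (o0 : O).

Definition tops (P : profile n O) : {ffun 'I_n -> O} := [ffun k => top o0 (P k)].

Lemma in_Sigma_upd (Sig : 'I_n -> pred (seq O)) P j s' :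
  in_Sigma Sig P -> Sig j s' -> in_Sigma Sig (upd P j s').
Proof. by move=> SigP Sig_s' k; rewrite /upd; case: eqP => [->|]. Qed.

Lemma tops_upd (P : profile n O) j s' :
  tops (upd P j s') = updf (tops P) j (top o0 s').
Proof. by apply/ffunP => k; rewrite !ffunE /upd; case: eqP. Qed.

Lemma updf_id (t : {ffun 'I_n -> O}) j : updf t j (t j) = t.
Proof. by apply/ffunP => k; rewrite ffunE; case: eqP => [->|]. Qed.

Lemma tops_upd_self (P : profile n O) j : updf (tops P) j (top o0 (P j)) = tops P.
Proof. by rewrite -[top o0 (P j)](ffunE (fun k => top o0 (P k))) updf_id. Qed.

Lemma tops_upd_top (P : profile n O) j s' :
  top o0 s' = top o0 (P j) -> tops (upd P j s') = tops P.
Proof. by move=> top_s'; rewrite tops_upd top_s' tops_upd_self. Qed.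

End Profiles.

Section Lotteries.
Local Open Scope ring_scope.
Variables (R : realType) (O : finType).

Definition dirac (o : O) : {ffun O -> R} := [ffun x => (x == o)%:R].

Definition mix (w : R) (p q : {ffun O -> R}) : {ffun O -> R} :=
  [ffun o => (1 - w) * p o + w * q o].

Lemma sum_dirac (o : O) : \sum_x dirac o x = 1.
Proof.
rewrite (bigD1 o) //= ffunE eqxx big1 ?addr0 // => x /negbTE x_o.
by rewrite ffunE x_o.
Qed.

Lemma dirac_lottery (o : O) : is_lottery (dirac o).
Proof. by split; [move=> x; rewrite ffunE ler0n | exact: sum_dirac]. Qed.

Lemma mix_lottery (w : R) p q :
  0 <= w <= 1 -> is_lottery p -> is_lottery q -> is_lottery (mix w p q).
Proof.
move=> /andP[w_ge0 w_le1] [p_ge0 sum_p] [q_ge0 sum_q]; split.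
  by move=> o; rewrite ffunE addr_ge0 // mulr_ge0 // subr_ge0.
under eq_bigr do rewrite ffunE.
by rewrite big_split /= -!mulr_sumr sum_p sum_q !mulr1 subrK.
Qed.

Variable n : nat.

Definition random_dictator (t : {ffun 'I_n -> O}) : {ffun O -> R} :=
  [ffun o => n%:R^-1 * \sum_(k < n) dirac (t k) o].

Lemma random_dictator_ge0 t o : 0 <= random_dictator t o.
Proof. by rewrite ffunE mulr_ge0 ?invr_ge0 ?ler0n ?sumr_ge0 // => k _; rewrite ffunE. Qed.

Lemma random_dictator_lottery t : (0 < n)%N -> is_lottery (random_dictator t).
Proof.
move=> n_gt0; split; first exact: random_dictator_ge0.
under eq_bigr do rewrite ffunE.
rewrite -mulr_sumr exchange_big /=.
under eq_bigr do rewrite sum_dirac.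
by rewrite sumr_const card_ord mulVf // pnatr_eq0 -lt0n.
Qed.

Lemma random_dictator_updf_lt (t : {ffun 'I_n -> O}) (j : 'I_n) (o : O) :
  o != t j -> random_dictator (updf t j o) (t j) < random_dictator t (t j).
Proof.
move=> o_tj; have n_gt0 : (0 < n)%N by apply: leq_ltn_trans (ltn_ord j).
rewrite !ffunE ltr_pM2l ?invr_gt0 ?ltr0n // (bigD1 j) // [ltRHS](bigD1 j) //=.
have others : \sum_(k < n | k != j) dirac (updf t j o k) (t j) =
              \sum_(k < n | k != j) dirac (t k) (t j).
  by apply: eq_bigr => k /negbTE k_j; rewrite [updf t j o k]ffunE k_j.
by rewrite others !ffunE !eqxx eq_sym (negbTE o_tj) add0r ltrDr ltr01.
Qed.

End Lotteries.

Arguments dirac {R O} o.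
Arguments random_dictator {R O n} t.

Section TopChoice.
Variables (R : realType) (n : nat) (O : finType) (o0 : O) (Sig : 'I_n -> pred (seq O)).
Hypothesis Sig_order : forall j s, Sig j s -> is_order s.
Variables (f : profile n O -> O) (g : {ffun 'I_n -> O} -> O).
Hypothesis f_tops : forall P, in_Sigma Sig P -> f P = g (tops o0 P).
Hypothesis g_fixed : forall j t o o', g (updf t j o) = o' -> g (updf t j o') = o'.

Lemma top_choice_upd_top P j s' :
  in_Sigma Sig P -> Sig j s' -> top o0 s' = top o0 (P j) -> f (upd P j s') = f P.
Proof.
move=> SigP Sig_s' top_s'.
by rewrite !f_tops ?tops_upd_top //; apply: in_Sigma_upd.
Qed.

Lemma top_choice_truthful_top P j s' :
  in_Sigma Sig P -> Sig j s' -> f (upd P j s') = top o0 (P j) -> f P = top o0 (P j).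
Proof.
move=> SigP Sig_s'; rewrite !f_tops ?tops_upd //; last exact: in_Sigma_upd.
by move=> /g_fixed; rewrite tops_upd_self.
Qed.

Lemma top_choice_pseudomonotone : pseudomonotone Sig f.
Proof.
move=> j P s' SigP Sig_s' /=.
have size_P := size_order_gt0 o0 (Sig_order (SigP j)).
have size_s' := size_order_gt0 o0 (Sig_order Sig_s').
have [fP'_top|fP'_ntop] := eqVneq (f (upd P j s')) (top o0 (P j)).
  by left; rewrite fP'_top (top_choice_truthful_top SigP Sig_s' fP'_top).
have [top_s'|ntop_s'] := eqVneq (top o0 s') (top o0 (P j)).
  by left; rewrite (top_choice_upd_top SigP Sig_s' top_s').
right; right; exists (top o0 (P j)).
by rewrite prefers_topl pos_top !(pos_gt0 o0) // fP'_ntop eq_sym ntop_s'.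
Qed.

Definition dictator_mixture (w : R) : mechanism n R O :=
  fun P => mix w (dirac (f P)) (random_dictator (tops o0 P)).

Lemma dictator_mixture_is_mechanism w :
  (0 < n)%N -> (0 <= w <= 1)%R -> is_mechanism Sig (dictator_mixture w).
Proof.
move=> n_gt0 w01 P _.
by apply: mix_lottery; [|apply: dirac_lottery|apply: random_dictator_lottery].
Qed.

Lemma dictator_mixture_eps_implements w eps :
  (0 <= w <= eps)%R -> eps_implements Sig (dictator_mixture w) f eps.
Proof.
move=> /andP[w_ge0 w_le_eps] P _; rewrite ffunE [dirac _ _]ffunE eqxx mulr1.
have := mulr_ge0 w_ge0 (random_dictator_ge0 R (tops o0 P) (f P)).
lra.
Qed.

Lemma dictator_mixture_lex_truthful w :
  (0 < w <= 1)%R -> lex_truthful o0 Sig (dictator_mixture w).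
Proof.
move=> /andP[w_gt0 w_le1] j P s' SigP Sig_s'.
have [top_s'|ntop_s'] := eqVneq (top o0 s') (top o0 (P j)).
  by left; rewrite /dictator_mixture top_choice_upd_top // tops_upd_top.
right; exists 0%N; split; first exact: (size_order_gt0 o0 (Sig_order (SigP j))).
split=> //; rewrite nth0 ![mix _ _ _ _]ffunE.
apply: ler_ltD.
  apply: ler_wpM2l; first by rewrite subr_ge0.
  rewrite !ffunE; case: eqP => [fP'_top|_]; last exact: ler0n.
  by rewrite (top_choice_truthful_top SigP Sig_s') ?eqxx.
rewrite ltr_pM2l // tops_upd.
have ntop_s't : top o0 s' != tops o0 P j by rewrite ffunE.
by have := random_dictator_updf_lt R ntop_s't; rewrite [tops o0 P j]ffunE.
Qed.

End TopChoice.

Theorem theorem18 (R : realType) (n : nat) (O : finType) (o0 : O)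
  (Sig : 'I_n -> pred (seq O))
  (HSig : forall j s, Sig j s -> is_order s)
  (f : profile n O -> O) :
  top_choice o0 Sig f ->
  pseudomonotone Sig f /\
  (forall eps : R, (0 < eps)%R ->
     exists M : mechanism n R O,
       is_mechanism Sig M /\ eps_implements Sig M f eps /\ lex_truthful o0 Sig M).
Proof.
case=> g [f_tops g_fixed]; split.
  exact: (top_choice_pseudomonotone HSig f_tops g_fixed).
move=> eps eps_gt0.
have [n0|n_gt0] := posnP n.
  exists (fun P => dirac (f P)); split; [|split].
  - by move=> P _; apply: dirac_lottery.
  - by move=> P _; rewrite ffunE eqxx lerBlDr lerDl ltW.
  - by move=> j; have := leq_trans (ltn_ord j) (eq_leq n0).
pose w := Num.min eps 1%R.
have w_gt0 : (0 < w)%R by rewrite lt_min eps_gt0 ltr01.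
have w_le1 : (w <= 1)%R by rewrite ge_min lexx orbT.
have w_le_eps : (w <= eps)%R by rewrite ge_min lexx.
exists (dictator_mixture o0 f w); split; [|split].
- by apply: dictator_mixture_is_mechanism; rewrite // ltW.
- by apply: dictator_mixture_eps_implements; rewrite ltW.
- by apply: (dictator_mixture_lex_truthful HSig f_tops g_fixed); rewrite w_gt0.
Qed.
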